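(* Let $s$ be an integer with $\sqrt{n} \le s \le n$ and let $\sigma$ be a sequence of $n$ integers with $\mathsf{lis}(\sigma) \in O(n/s)$. Then a longest increasing subsequence of $\sigma$ can be found in $O(\frac{1}{s} \cdot n^{2} \log n)$ time using $O(s \log n)$ bits of working space.
   Context: A sequence of integers may contain repetitions; $\mathsf{lis}(\sigma)$ is the length of a longest (strictly) increasing subsequence of $\sigma$. Computational model: RAM with read-only input, write-only output, and space measured in bits of read-write working memory. *)

From mathcomp Require Import all_boot all_order all_algebra.
Set Implicit Arguments. Unset Strict Implicit. Unset Printing Implicit Defensive.
Import Order.TTheory GRing.Theory Num.Theory.
Local Open Scope ring_scope.

Definition lis (s : seq int) : nat :=
  \max_(m : (size s).-tuple bool)
     (if sorted <%R (mask m s) then size (mask m s) else 0%N).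

(* binary logarithm, rounded so that it is >= 1 *)
Definition lg (n : nat) : nat := (trunc_log 2 n).+1.

(* Registers are indexed by nat; working memory is the list of
   registers r_0 .. r_{k-1} touched so far.
   The input sigma is read-only and accessible only through comparisons
   of its entries; the output is a write-only stream of ints. *)
Inductive instr :=
| IConst of nat & int
| IAdd of nat & nat & nat
| ISub of nat & nat & nat
| IMul of nat & nat & nat
| IDiv of nat & nat & nat      (* r[d] := r[a] div r[b] (floor; 0 if r[b]=0) *)
| ILoad of nat & nat
| IStore of nat & nat
| IJlt of nat & nat & nat
| IJeq of nat & nat & nat
| IJltIn of nat & nat & nat
| IJeqIn of nat & nat & nat
| IOut of nat
| IHalt.

Definition program := seq instr.

Record config := Config { pc : nat; regs : seq int; out : seq int }.

Inductive state := Running of config | Halted of config | Crashed.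

Definition rget (r : seq int) (i : nat) : int := nth 0 r i.

Section Step.
Variables (p : program) (sigma : seq int) (w : nat).

Definition wr (c : config) (d : nat) (v : int) : state :=
  if (`|v| < 2 ^ w)%N
  then Running (Config (pc c).+1 (set_nth 0 (regs c) d v) (out c))
  else Crashed.

Definition addr (v : int) : option nat :=
  if 0 <= v then Some `|v|%N else None.

Definition inidx (v : int) : option nat :=
  if (0 <= v) && (`|v| < size sigma)%N then Some `|v|%N else None.

Definition jump (c : config) (b : bool) (t : nat) : state :=
  Running (Config (if b then t else (pc c).+1) (regs c) (out c)).

Definition step (c : config) : state :=
  let r := rget (regs c) in
  match nth IHalt p (pc c) with
  | IConst d k => wr c d k
  | IAdd d a b => wr c d (r a + r b)
  | ISub d a b => wr c d (r a - r b)
  | IMul d a b => wr c d (r a * r b)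
  | IDiv d a b => wr c d (r a %/ r b)%Z
  | ILoad d a => match addr (r a) with
                 | Some i => wr c d (r i) | None => Crashed end
  | IStore a b => match addr (r a) with
                  | Some i => wr c i (r b) | None => Crashed end
  | IJlt a b t => jump c (r a < r b) t
  | IJeq a b t => jump c (r a == r b) t
  | IJltIn a b t => match inidx (r a), inidx (r b) with
                    | Some i, Some j => jump c (nth 0 sigma i < nth 0 sigma j) t
                    | _, _ => Crashed end
  | IJeqIn a b t => match inidx (r a), inidx (r b) with
                    | Some i, Some j => jump c (nth 0 sigma i == nth 0 sigma j) t
                    | _, _ => Crashed end
  | IOut a => Running (Config (pc c).+1 (regs c) (rcons (out c) (r a)))
  | IHalt => if (pc c < size p)%N then Halted c else Crashed
  end.

Definition step_state (st : state) : state :=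
  match st with Running c => step c | _ => st end.

Definition exec (init : state) (t : nat) : state := iter t step_state init.
End Step.

Definition init_config (n s : nat) : config :=
  Config 0 [:: n%:Z; s%:Z] [::].

(* working space in bits of a configuration: each touched register costs
   its bit length plus one (sign) bit *)
Definition space_cfg (c : config) : nat :=
  \sum_(x <- regs c) (trunc_log 2 `|x|).+2.

Definition space_state (st : state) : nat :=
  match st with Running c | Halted c => space_cfg c | Crashed => 0%N end.

(* the output (read as a list of positions of sigma) is a longest
   increasing subsequence of sigma *)
Definition is_lis_positions (sigma : seq int) (o : seq int) : Prop :=
  all (fun x => 0 <= x) o /\
  let idx := map (fun x : int => `|x|%N) o in
  [/\ sorted ltn idx, all (fun i => i < size sigma)%N idx,
      sorted <%R (map (nth 0 sigma) idx) & size idx = lis sigma].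

Definition finds_lis_within (p : program) (w : nat) (sigma : seq int)
    (s T S : nat) : Prop :=
  exists t c, (t <= T)%N /\
    exec p sigma w (Running (init_config (size sigma) s)) t = Halted c /\
    (is_lis_positions sigma (out c) \/ is_lis_positions sigma (rev (out c))) /\
    (forall t', (t' <= t)%N ->
       (space_state (exec p sigma w (Running (init_config (size sigma) s)) t') <= S)%N).

(* Patience sorting with binary search finds, in one left-to-right scan that
   keeps only the array of at most lis(sigma) "tails", the length of the
   longest increasing subsequence ending at each position.  Instead of storing
   predecessor pointers, the program recovers a longest increasing subsequence
   backwards by rescanning: given the entry b found last and its rank m + 1,
   one more scan of [0, b) finds a position j whose longest increasing
   subsequence has m entries and with sigma_j < sigma_b.  Hence lis(sigma) + 1
   scans of O(n log n) steps and O(lis(sigma)) registers of O(log n) bits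
   suffice, and lis(sigma) <= c0 n / s <= c0 s turns this into
   O(n^2 log n / s) time and O(s log n) space. *)

From mathcomp Require Import all_boot all_order all_algebra zify ring.
Set Implicit Arguments. Unset Strict Implicit. Unset Printing Implicit Defensive.
Import Order.TTheory GRing.Theory Num.Theory.

(** * Increasing subsequences and patience sorting *)

Section IncreasingSubsequences.
Variable sigma : seq int.
Local Notation n := (size sigma).

Definition item (i : nat) : int := nth 0%R sigma i.

Definition above (a b : nat) : bool := (b < a) && (item b < item a)%R.
Definition below (a b : nat) : bool := above b a.

(* [ends_inc j k]: some increasing subsequence with k + 1 entries ends at
   position j; [j :: rest] lists it backwards. *)
Definition ends_inc (j k : nat) : Prop :=
  exists rest, [/\ path above j rest, size rest = k & j < n].

Definition lis_at (j k : nat) : Prop :=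
  ends_inc j k /\ forall k', ends_inc j k' -> k' <= k.

Lemma above_trans : transitive above.
Proof.
move=> y x z /andP[lt_yx lt_vyx] /andP[lt_zy lt_vzy].
by apply/andP; split; [lia | exact: lt_trans lt_vzy lt_vyx].
Qed.

Lemma ends_inc_lt j k : ends_inc j k -> j < n.
Proof. by case=> ? []. Qed.

Lemma mask_sigma (m : bitseq) : mask m sigma = map item (mask m (iota 0 n)).
Proof. by rewrite map_mask -[sigma in LHS](mkseq_nth 0%R). Qed.

Lemma mask_iota_mem (idx : seq nat) : sorted ltn idx -> all (fun i => i < n) idx ->
  mask [seq i \in idx | i <- iota 0 n] (iota 0 n) = idx.
Proof.
move=> sorted_idx idx_lt; rewrite -filter_mask.
apply: (irr_sorted_eq ltn_trans ltnn) => //.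
  by apply: sorted_filter; [exact: ltn_trans | exact: iota_ltn_sorted].
move=> i; rewrite mem_filter mem_iota add0n /=.
by case idx_i: (i \in idx); rewrite ?(allP idx_lt i idx_i).
Qed.

Lemma sorted_below (idx : seq nat) :
  sorted below idx = sorted ltn idx && sorted <%R (map item idx).
Proof. by rewrite sorted_map; case: idx => //= i s; rewrite -path_relI. Qed.

Lemma size_le_lis (idx : seq nat) :
  sorted below idx -> all (fun i => i < n) idx -> size idx <= lis sigma.
Proof.
rewrite sorted_below => /andP[lt_idx inc_idx] idx_lt.
have size_m : size [seq i \in idx | i <- iota 0 n] == n by rewrite size_map size_iota.
rewrite /lis; apply: leq_trans (leq_bigmax (Tuple size_m)) => /=.
by rewrite mask_sigma mask_iota_mem // inc_idx size_map.
Qed.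

Lemma ends_inc_lt_lis j k : ends_inc j k -> k < lis sigma.
Proof.
case=> rest [path_j <- lt_jn].
have sorted_rev : sorted below (rev (j :: rest)) by rewrite rev_sorted.
have rev_lt : all (fun i => i < n) (rev (j :: rest)).
  rewrite all_rev /= lt_jn; apply/allP => i i_rest.
  by have /andP[lt_ij _] := allP (order_path_min above_trans path_j) i i_rest; lia.
by have := size_le_lis sorted_rev rev_lt; rewrite size_rev.
Qed.

Lemma lis_le_size : lis sigma <= n.
Proof.
apply/bigmax_leqP => t _; case: ifP => // _.
by rewrite size_mask ?size_tuple // -[X in _ <= X](size_tuple t) count_size.
Qed.

Lemma mask_ends_inc (t : bitseq) : size t = n -> sorted <%R (mask t sigma) ->
  0 < size (mask t sigma) -> exists j, ends_inc j (size (mask t sigma)).-1.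
Proof.
move=> size_t inc_t pos_t.
set idx := mask t (iota 0 n).
have mask_t : mask t sigma = map item idx by rewrite mask_sigma.
have idx_below : sorted below idx.
  rewrite sorted_below -mask_t inc_t andbT.
  by apply: sorted_mask; [exact: ltn_trans | exact: iota_ltn_sorted].
have idx_lt : all (fun i => i < n) (rev idx).
  by rewrite all_rev; apply/allP => i /mem_mask; rewrite mem_iota; lia.
move: idx_below; rewrite -[idx]revK rev_sorted.
rewrite mask_t size_map -size_rev in pos_t *.
case: (rev idx) idx_lt pos_t => [|j rest] //= /andP[lt_jn _] _ path_j.
by exists j, rest.
Qed.

Lemma lis_le N : (forall j k, ends_inc j k -> k < N) -> lis sigma <= N.
Proof.
move=> ends_lt; apply/bigmax_leqP => t _; case: ifP => // inc_t.
case size_t: (size (mask t sigma)) => [|k] //.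
have pos_t : 0 < size (mask t sigma) by rewrite size_t.
have [j ends_j] := mask_ends_inc (size_tuple t) inc_t pos_t.
by have := ends_lt _ _ ends_j; rewrite size_t.
Qed.

Lemma lis_attained : 0 < lis sigma -> exists j, ends_inc j (lis sigma).-1.
Proof.
have t0 : n.-tuple bool := [tuple of nseq n false].
rewrite /lis (bigop.bigmax_eq_arg t0) //.
set t := [arg max_(i > t0) _]%N.
case: ifP => // inc_t pos_t.
exact: mask_ends_inc (size_tuple t) inc_t pos_t.
Qed.

Lemma lis_at_uniq j k1 k2 : lis_at j k1 -> lis_at j k2 -> k1 = k2.
Proof. by move=> [ends1 max1] [ends2 max2]; apply/eqP; rewrite eqn_leq max1 ?max2. Qed.

Lemma lis_at_pred b m : lis_at b m.+1 ->
  exists j, [/\ j < b, (item j < item b)%R & lis_at j m].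
Proof.
case=> [[[|j rest] [path_b size_rest lt_bn]]] // max_b.
move: path_b => /= /andP[/andP[lt_jb lt_vjb] path_j].
exists j; split => //; split; first by exists rest; split => //; [case: size_rest | lia].
move=> k [rest' [path_j' size_rest' _]].
have : ends_inc b k.+1 by exists (j :: rest'); rewrite /= path_j' /above lt_jb lt_vjb size_rest'.
by move/max_b.
Qed.

Lemma lis_at_last : 0 < lis sigma -> exists j, lis_at j (lis sigma).-1.
Proof.
move=> pos; have [j ends_j] := lis_attained pos.
by exists j; split => // k /ends_inc_lt_lis; lia.
Qed.

(* The array of patience sorting after scanning positions [0, i): entry l is
   the position holding the least value that ends an increasing subsequence
   with l + 1 entries. *)
Definition tails_inv (i : nat) (ts : seq nat) : Prop := [/\ i <= n,
  forall l, l < size ts -> nth 0 ts l < i,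
  forall l1 l2, l1 < l2 -> l2 < size ts -> (item (nth 0 ts l1) < item (nth 0 ts l2))%R,
  forall l, l < size ts -> ends_inc (nth 0 ts l) l &
  forall j k, j < i -> ends_inc j k -> k < size ts /\ (item (nth 0 ts k) <= item j)%R].

Definition lower_bound (ts : seq nat) (x : int) (c : nat) : Prop := [/\ c <= size ts,
  forall l, l < c -> (item (nth 0 ts l) < x)%R &
  forall l, c <= l -> l < size ts -> ~~ (item (nth 0 ts l) < x)%R].

Lemma lis_at_lower_bound i ts c :
  tails_inv i ts -> lower_bound ts (item i) c -> i < n -> lis_at i c.
Proof.
case=> _ tails_lt _ tails_ends tails_min [le_c below_c above_c] lt_in; split.
  case: c le_c below_c {above_c} => [|c] le_c below_c; first by exists [::].
  have [rest [path_rest size_rest _]] := tails_ends c le_c.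
  exists (nth 0 ts c :: rest); split => //=; last by rewrite size_rest.
  by rewrite path_rest andbT /above tails_lt // below_c.
move=> _ [[|j rest] [path_i <- _]] //=.
move: path_i => /= /andP[/andP[lt_ji lt_vji] path_j].
have ends_j : ends_inc j (size rest) by exists rest; split => //; lia.
have [lt_rest le_vj] := tails_min j _ lt_ji ends_j.
case: (leqP c (size rest)) => // le_c_rest.
by have := above_c _ le_c_rest lt_rest; rewrite (le_lt_trans le_vj lt_vji).
Qed.

Lemma tails_inv_insert i ts c : tails_inv i ts -> lower_bound ts (item i) c -> i < n ->
  tails_inv i.+1 (set_nth 0 ts c i).
Proof.
move=> inv lb lt_in; have [ends_i max_i] := lis_at_lower_bound inv lb lt_in.
case: inv => _ tails_lt tails_inc tails_ends tails_min; case: lb => le_c below_c above_c.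
have size_ts' : size (set_nth 0 ts c i) = maxn c.+1 (size ts) by rewrite size_set_nth.
have nth_ts' l : nth 0 (set_nth 0 ts c i) l = if l == c then i else nth 0 ts l.
  by rewrite nth_set_nth.
have not_below_c : c < size ts -> (item (nth 0 ts c) >= item i)%R.
  by move=> lt_c; rewrite leNgt above_c.
split; rewrite ?size_ts'.
- exact: lt_in.
- move=> l lt_l; rewrite nth_ts'; case: eqP => // ne_lc.
  by apply: ltnW; apply: tails_lt; lia.
- move=> l1 l2 lt_l12 lt_l2; rewrite !nth_ts'.
  case: eqP => [e1|ne1]; case: eqP => [e2|ne2].
  + lia.
  + rewrite e1 in lt_l12.
    by apply: le_lt_trans (not_below_c _) (tails_inc _ _ lt_l12 _); lia.
  + by rewrite e2 in lt_l12; apply: below_c.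
  + by apply: tails_inc => //; lia.
- move=> l lt_l; rewrite nth_ts'; case: eqP => [->|ne_lc] //.
  by apply: tails_ends; lia.
- move=> j k lt_ji ends_j; rewrite nth_ts'.
  case: (ltnP j i) => [lt_j|ge_j].
    have [lt_k le_vk] := tails_min j k lt_j ends_j; split; first lia.
    by case: eqP => [e|] //; rewrite e in lt_k le_vk; exact: le_trans (not_below_c lt_k) le_vk.
  have e_ji : j = i by lia.
  subst j; have le_kc := max_i k ends_j.
  split; first lia.
  by case: eqP => // ne_kc; apply: ltW; apply: below_c; lia.
Qed.

Lemma tails_inv_size i ts : tails_inv i ts -> size ts <= lis sigma.
Proof.
case=> _ _ _ tails_ends _; case size_ts: (size ts) => [|k] //.
by apply: (@ends_inc_lt_lis (nth 0 ts k)); apply: tails_ends; rewrite size_ts.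
Qed.

Lemma tails_inv_lis ts : tails_inv n ts -> lis sigma = size ts.
Proof.
move=> inv; apply/eqP; rewrite eqn_leq (tails_inv_size inv) andbT.
apply: lis_le => j k ends_j; case: inv => _ _ _ _ tails_min.
by case: (tails_min j k (ends_inc_lt ends_j) ends_j).
Qed.

End IncreasingSubsequences.

(** * Specifications of machine code *)

Lemma all_set_nth T (P : pred T) x0 (s : seq T) k y :
  P x0 -> all P s -> P y -> all P (set_nth x0 s k y).
Proof.
move=> P_x0; elim: k s => [|k IH] [|x s] /=.
- by move=> _ ->.
- by move=> /andP[_ ->] ->.
- by move=> _ P_y; rewrite P_x0 -cat_nseq all_cat all_nseq P_x0 orbT /= P_y.
- by move=> /andP[-> P_s] P_y; rewrite IH.
Qed.

Definition upd (v : nat -> nat) (d x i : nat) : nat := if i == d then x else v i.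
Arguments upd v d x i /.

Lemma step_halt p sigma w c :
  nth IHalt p (pc c) = IHalt -> pc c < size p -> step p sigma w c = Halted c.
Proof. by rewrite /step => -> ->. Qed.

(* Registers below [base] hold scalars, the next [cap] ones an array; every
   value stays at most [B], which fits in a word. *)
Section Simulation.
Variables (p : program) (sigma : seq int) (w base cap B : nat).

Definition bounded (c : config) : bool :=
  (size (regs c) <= base + cap) && all (fun x : int => (`|x| <= B)%N) (regs c).

Definition safe_run (c : config) (t : nat) (c' : config) : Prop :=
  exec p sigma w (Running c) t = Running c' /\
  forall t', t' <= t -> exists c'', exec p sigma w (Running c) t' = Running c'' /\ bounded c''.

Definition reaches (c : config) (N : nat) (Q : config -> Prop) : Prop :=
  exists t c', [/\ t <= N, safe_run c t c' & Q c'].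

Definition describes (pc0 : nat) (v : nat -> nat) (ts : seq nat) (o : seq int) (c : config) :=
  [/\ pc c = pc0, forall i, i < base -> rget (regs c) i = Posz (v i),
     forall l, l < size ts -> rget (regs c) (base + l) = Posz (nth 0 ts l),
     out c = o & bounded c].

Definition spec pc0 v ts o N (Q : config -> Prop) : Prop :=
  forall c, describes pc0 v ts o c -> reaches c N Q.

Lemma reaches_now c N (Q : config -> Prop) : bounded c -> Q c -> reaches c N Q.
Proof. by move=> bc Qc; exists 0, c; split => //; split => // t'; rewrite leqn0 => /eqP ->; exists c. Qed.

Lemma reaches_mono c N N' Q : N <= N' -> reaches c N Q -> reaches c N' Q.
Proof. by move=> le_N [t [c' [le_t run Qc']]]; exists t, c'; split => //; lia. Qed.

Lemma reaches_step c c' N Q :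
  step p sigma w c = Running c' -> bounded c -> reaches c' N Q -> reaches c N.+1 Q.
Proof.
move=> step_c bc [t [c'' [le_t [run_t safe] Qc'']]].
have exec_S t' : exec p sigma w (Running c) t'.+1 = exec p sigma w (Running c') t'.
  by rewrite /exec iterSr /= step_c.
exists t.+1, c''; split => //; split; first by rewrite exec_S.
by case=> [|t'] le_t'; [exists c | rewrite exec_S; apply: safe].
Qed.

Lemma spec_mono pc0 v ts o N N' Q : N <= N' -> spec pc0 v ts o N Q -> spec pc0 v ts o N' Q.
Proof. by move=> le_N spec_N c dc; apply: reaches_mono le_N (spec_N c dc). Qed.

Lemma spec_any_tails pc0 v ts o N Q : spec pc0 v [::] o N Q -> spec pc0 v ts o N Q.
Proof. by move=> spec_nil c [? ? _ ? ?]; apply: spec_nil; split. Qed.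

Lemma describes_bound pc0 v ts o c i : describes pc0 v ts o c -> i < base -> v i <= B.
Proof.
case=> _ regs_v _ _ /andP[_ regs_B] lt_i; have := regs_v i lt_i; rewrite /rget.
case: (ltnP i (size (regs c))) => lt_ic.
  by move=> e; have := allP regs_B _ (mem_nth 0%R lt_ic); rewrite e.
by rewrite nth_default // => -[<-].
Qed.

Lemma spec_jump pc0 v ts o N Q c b t : describes pc0 v ts o c -> step p sigma w c = jump c b t ->
  spec (if b then t else pc0.+1) v ts o N Q -> reaches c N.+1 Q.
Proof.
move=> [pc_c regs_v regs_ts out_c bc] step_c spec_next.
apply: (@reaches_step _ (Config (if b then t else (pc c).+1) (regs c) (out c))) (bc) _.
  by rewrite step_c.
by apply: spec_next; split => //=; rewrite ?pc_c.
Qed.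

Lemma spec_jlt pc0 a b t v ts o N Q : nth IHalt p pc0 = IJlt a b t -> a < base -> b < base ->
  spec (if v a < v b then t else pc0.+1) v ts o N Q -> spec pc0 v ts o N.+1 Q.
Proof.
move=> instr lt_a lt_b spec_next c dc; apply: (spec_jump dc _ spec_next).
by case: dc => pc_c regs_v _ _ _; rewrite /step pc_c instr /= !regs_v // ltz_nat.
Qed.

Lemma spec_jeq pc0 a b t v ts o N Q : nth IHalt p pc0 = IJeq a b t -> a < base -> b < base ->
  spec (if v a == v b then t else pc0.+1) v ts o N Q -> spec pc0 v ts o N.+1 Q.
Proof.
move=> instr lt_a lt_b spec_next c dc; apply: (spec_jump dc _ spec_next).
by case: dc => pc_c regs_v _ _ _; rewrite /step pc_c instr /= !regs_v // eqz_nat.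
Qed.

Lemma inidx_nat i : i < size sigma -> inidx sigma (Posz i) = Some i.
Proof. by rewrite /inidx /= => ->. Qed.

Lemma spec_jltin pc0 a b t v ts o N Q : nth IHalt p pc0 = IJltIn a b t -> a < base -> b < base ->
  v a < size sigma -> v b < size sigma ->
  spec (if (item sigma (v a) < item sigma (v b))%R then t else pc0.+1) v ts o N Q ->
  spec pc0 v ts o N.+1 Q.
Proof.
move=> instr lt_a lt_b lt_va lt_vb spec_next c dc; apply: (spec_jump dc _ spec_next).
by case: dc => pc_c regs_v _ _ _; rewrite /step pc_c instr /= !regs_v // !inidx_nat.
Qed.

Lemma spec_out pc0 a v ts o N Q : nth IHalt p pc0 = IOut a -> a < base ->
  spec pc0.+1 v ts (rcons o (Posz (v a))) N Q -> spec pc0 v ts o N.+1 Q.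
Proof.
move=> instr lt_a spec_next c [pc_c regs_v regs_ts out_c bc].
apply: (@reaches_step _ (Config (pc c).+1 (regs c) (rcons (out c) (Posz (v a))))) (bc) _.
  by rewrite /step pc_c instr /= regs_v.
by apply: spec_next; split; rewrite //= ?pc_c ?out_c.
Qed.

Hypothesis B_lt_word : B < 2 ^ w.

Lemma describes_write pc0 v ts o c d x : describes pc0 v ts o c -> d < base -> x <= B ->
  exists c', wr w c d (Posz x) = Running c' /\ describes pc0.+1 (upd v d x) ts o c'.
Proof.
case=> pc_c regs_v regs_ts out_c /andP[size_c regs_B] lt_d le_x; rewrite /wr /=.
have -> : x < 2 ^ w by lia.
eexists; split; first reflexivity.
split => /=.
- by rewrite pc_c.
- by move=> i lt_i; rewrite /rget nth_set_nth /=; case: eqP => // _; exact: regs_v.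
- move=> l lt_l; rewrite /rget nth_set_nth /=.
  have -> : (base + l == d) = false by apply/eqP; lia.
  exact: regs_ts.
- exact: out_c.
- by rewrite /bounded /= size_set_nth all_set_nth // andbT; lia.
Qed.

Lemma spec_write pc0 v ts o N Q c d x : describes pc0 v ts o c -> d < base -> x <= B ->
  step p sigma w c = wr w c d (Posz x) -> spec pc0.+1 (upd v d x) ts o N Q -> reaches c N.+1 Q.
Proof.
move=> dc lt_d le_x step_c spec_next; have [c' [wr_c dc']] := describes_write dc lt_d le_x.
by case: (dc) => _ _ _ _ bc; apply: reaches_step bc (spec_next c' dc'); rewrite step_c.
Qed.

Lemma spec_const pc0 d k v ts o N Q :
  nth IHalt p pc0 = IConst d (Posz k) -> d < base -> k <= B ->
  spec pc0.+1 (upd v d k) ts o N Q -> spec pc0 v ts o N.+1 Q.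
Proof.
move=> instr lt_d le_k spec_next c dc; apply: (spec_write dc lt_d le_k) spec_next.
by case: dc => pc_c _ _ _ _; rewrite /step pc_c instr.
Qed.

Lemma spec_add pc0 d a b v ts o N Q :
  nth IHalt p pc0 = IAdd d a b -> d < base -> a < base -> b < base -> v a + v b <= B ->
  spec pc0.+1 (upd v d (v a + v b)) ts o N Q -> spec pc0 v ts o N.+1 Q.
Proof.
move=> instr lt_d lt_a lt_b le_x spec_next c dc; apply: (spec_write dc lt_d le_x) spec_next.
by case: dc => pc_c regs_v _ _ _; rewrite /step pc_c instr /= !regs_v.
Qed.

Lemma spec_sub pc0 d a b v ts o N Q :
  nth IHalt p pc0 = ISub d a b -> d < base -> a < base -> b < base -> v b <= v a ->
  spec pc0.+1 (upd v d (v a - v b)) ts o N Q -> spec pc0 v ts o N.+1 Q.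
Proof.
move=> instr lt_d lt_a lt_b le_ba spec_next c dc.
have le_x : v a - v b <= B by have := describes_bound dc lt_a; lia.
apply: (spec_write dc lt_d le_x) spec_next.
by case: dc => pc_c regs_v _ _ _; rewrite /step pc_c instr /= !regs_v // subzn.
Qed.

Lemma spec_div pc0 d a b v ts o N Q :
  nth IHalt p pc0 = IDiv d a b -> d < base -> a < base -> b < base ->
  spec pc0.+1 (upd v d (v a %/ v b)) ts o N Q -> spec pc0 v ts o N.+1 Q.
Proof.
move=> instr lt_d lt_a lt_b spec_next c dc.
have le_x : v a %/ v b <= B by apply: leq_trans (leq_div _ _) (describes_bound dc lt_a).
apply: (spec_write dc lt_d le_x) spec_next.
by case: dc => pc_c regs_v _ _ _; rewrite /step pc_c instr /= !regs_v // divz_nat.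
Qed.

Lemma spec_load pc0 d a l v ts o N Q :
  nth IHalt p pc0 = ILoad d a -> d < base -> a < base -> v a = base + l -> l < size ts ->
  nth 0 ts l <= B ->
  spec pc0.+1 (upd v d (nth 0 ts l)) ts o N Q -> spec pc0 v ts o N.+1 Q.
Proof.
move=> instr lt_d lt_a v_a lt_l le_x spec_next c dc; apply: (spec_write dc lt_d le_x) spec_next.
by case: dc => pc_c regs_v regs_ts _ _; rewrite /step pc_c instr /= regs_v // v_a /addr /= regs_ts.
Qed.

Lemma spec_store pc0 a b l v ts o N Q :
  nth IHalt p pc0 = IStore a b -> a < base -> b < base -> v a = base + l -> l <= size ts ->
  l < cap -> v b <= B ->
  spec pc0.+1 v (set_nth 0 ts l (v b)) o N Q -> spec pc0 v ts o N.+1 Q.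
Proof.
move=> instr lt_a lt_b v_a le_l lt_l le_x spec_next c [pc_c regs_v regs_ts out_c bc].
have /andP[size_c regs_B] := bc.
have step_c : step p sigma w c = wr w c (base + l) (Posz (v b)).
  by rewrite /step pc_c instr /= regs_v // v_a /addr /= regs_v.
have lt_x : v b < 2 ^ w by lia.
apply: (@reaches_step _ (Config pc0.+1 (set_nth 0%R (regs c) (base + l) (Posz (v b))) (out c))) (bc) _.
  by rewrite step_c /wr /= lt_x pc_c.
apply: spec_next; split => //=.
- move=> i lt_i; rewrite /rget nth_set_nth /=.
  have -> : (i == base + l) = false by apply/eqP; lia.
  exact: regs_v.
- move=> l' lt_l'; rewrite /rget nth_set_nth /= nth_set_nth /= eqn_add2l.
  case: eqP => // ne_l; apply: regs_ts; move: lt_l'; rewrite size_set_nth; lia.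
- by rewrite /bounded /= size_set_nth all_set_nth // andbT; lia.
Qed.

End Simulation.

Lemma space_bounded base cap B c :
  bounded base cap B c -> space_cfg c <= (base + cap) * (trunc_log 2 B).+2.
Proof.
rewrite /bounded /space_cfg => /andP[size_c regs_B].
apply: leq_trans (leq_mul size_c (leqnn _)).
elim: (regs c) regs_B => [|x r IH] /=; first by rewrite big_nil.
move=> /andP[le_x regs_B]; rewrite big_cons mulSn.
by apply: leq_add (IH regs_B); rewrite ltnS; apply: leq_trunc_log.
Qed.

(** * The program *)

(* Registers: r0 = n, r1 = s (unused), r2, r3, r4 = 0, 1, 2, r5 = 17, the
   address of the tails array; r6 = the rank m of the next entry to output (0
   in the first pass), r7 = the position b that entry must precede (n at
   first), r8 = the scan position i, r9 = the number of tails, r10 and r11 =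
   the binary search window, r12--r14 and r16 = scratch, r15 = the last
   position of rank m found so far that can precede b.
   A pass (6--35) runs patience sorting over [0, b); the first one only
   computes lis, each later one outputs r15 and makes it the new b. *)
Definition lis_prog : program := [::
 IConst 2 (Posz 0); IConst 3 (Posz 1); IConst 4 (Posz 2); IConst 5 (Posz 17);
 IAdd 7 0 2; IAdd 6 2 2;
 (* 6 *) IAdd 8 2 2; IAdd 9 2 2;
 (* 8 *) IJlt 8 7 10; IJeq 2 2 36;
 (* 10 *) IAdd 10 2 2; IAdd 11 9 2;
 (* 12 *) IJlt 10 11 14; IJeq 2 2 23;
 (* 14 *) IAdd 12 10 11; IDiv 12 12 4; IAdd 13 5 12; ILoad 14 13; IJltIn 14 8 21;
 (* 19 *) IAdd 11 12 2; IJeq 2 2 12;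
 (* 21 *) IAdd 10 12 3; IJeq 2 2 12;
 (* 23 *) IAdd 16 10 3; IJeq 16 6 26; IJeq 2 2 30;
 (* 26 *) IJeq 7 0 29; IJltIn 8 7 29; IJeq 2 2 30;
 (* 29 *) IAdd 15 8 2;
 (* 30 *) IAdd 13 5 10; IStore 13 8; IJlt 10 9 34; IAdd 9 9 3;
 (* 34 *) IAdd 8 8 3; IJeq 2 2 8;
 (* 36 *) IJeq 6 2 41; IOut 15; IAdd 7 15 2; ISub 6 6 3; IJeq 2 2 42;
 (* 41 *) IAdd 6 9 2;
 (* 42 *) IJeq 6 2 44; IJeq 2 2 6;
 (* 44 *) IHalt ].

Definition pass_cost (n : nat) : nat := 8 * lg n + 30.

Definition run_time (n l : nat) : nat := l * (n * pass_cost n + 11) + n * pass_cost n + 13.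

Definition frame (S : seq nat) (v v' : nat -> nat) : bool := all (fun i => v' i == v i) S.

Lemma frame_refl S v : frame S v v.
Proof. exact/allP. Qed.

Lemma frame_trans S v1 v2 v3 : frame S v1 v2 -> frame S v2 v3 -> frame S v1 v3.
Proof.
move=> /allP f12 /allP f23; apply/allP => i S_i.
by rewrite (eqP (f23 i S_i)) (eqP (f12 i S_i)).
Qed.

Lemma frame_catl S1 S2 v v' : frame (S1 ++ S2) v v' -> frame S1 v v'.
Proof. by rewrite /frame all_cat => /andP[]. Qed.

Lemma frameE S v v' i : frame S v v' -> i \in S -> v' i = v i.
Proof. by move=> /allP f S_i; apply/eqP; apply: f. Qed.

Definition pass_regs : seq nat := [:: 0; 1; 2; 3; 4; 5; 6; 7].
Definition insert_regs : seq nat := pass_regs ++ [:: 15].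
Definition bsearch_regs : seq nat := pass_regs ++ [:: 8; 9; 15].

Section LisProgram.
Variables (sigma : seq int) (w : nat).
Hypothesis word_big : 2 * size sigma + 40 < 2 ^ w.
Local Notation n := (size sigma).
Local Notation spec := (spec lis_prog sigma w 17 (lis sigma) (2 * size sigma + 40)).

Definition consts (v : nat -> nat) : Prop := [/\ v 0 = n, v 2 = 0, v 3 = 1, v 4 = 2 & v 5 = 17].

Lemma bsearch_spec r : forall v ts o N Q,
  consts v -> v 8 < n -> v 10 <= v 11 -> v 11 <= size ts -> v 11 - v 10 < 2 ^ r ->
  size ts <= n -> (forall l, l < size ts -> nth 0 ts l < n) ->
  (forall l1 l2, l1 < l2 -> l2 < size ts ->
     (item sigma (nth 0 ts l1) < item sigma (nth 0 ts l2))%R) ->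
  (forall l, l < v 10 -> (item sigma (nth 0 ts l) < item sigma (v 8))%R) ->
  (forall l, v 11 <= l -> l < size ts -> ~~ (item sigma (nth 0 ts l) < item sigma (v 8))%R) ->
  (forall v', frame bsearch_regs v v' -> lower_bound sigma ts (item sigma (v 8)) (v' 10) ->
     spec 23 v' ts o N Q) ->
  spec 12 v ts o (8 * r + 2 + N) Q.
Proof.
elim: r => [|r IH] v ts o N Q cv lt_in le_lohi le_hi width le_ts ts_lt ts_inc lo_inv hi_inv K;
  case: (ltnP (v 10) (v 11)) => [lt_lohi | ge_lohi]; first by exfalso; lia.
2: {
  have [v0 v2 v3 v4 v5] := cv; have width_S := expnS 2 r.
  rewrite (_ : 8 * r.+1 + 2 + N = (8 * r + 2 + N).+4.+4); last lia.
  apply: spec_jlt => //; rewrite lt_lohi.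
  apply: spec_add => //=; first lia.
  apply: spec_div => //=; rewrite v4.
  set mid := (v 10 + v 11) %/ 2.
  have mid_in : v 10 <= mid < v 11 by rewrite /mid; lia.
  apply: spec_add => //=; first lia.
  apply: (spec_load word_big (l := mid)) => //=; try lia.
    by have := ts_lt mid; lia.
  apply: spec_jltin => //=; first by apply: ts_lt; lia.
  case: ifP => [lt_mid | ge_mid].
  - apply: spec_add => //=; first lia.
    apply: spec_jeq => //=; rewrite eqxx.
    apply: IH => //=; try lia.
    rewrite v3 => l lt_l; case: (ltnP l (v 10)) => [|ge_l]; first exact: lo_inv.
    case: (ltnP l mid) => [lt_lm | ge_lm].
      by apply: lt_trans (ts_inc _ _ lt_lm _) lt_mid; lia.
    by have -> : l = mid by lia.
  - apply: spec_add => //=; first lia.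
    apply: spec_jeq => //=; rewrite eqxx.
    apply: IH => //=; try lia.
    move=> l ge_l lt_l; case: (ltnP mid l) => [lt_ml | le_lm].
      rewrite -leNgt; apply: ltW; apply: le_lt_trans (ts_inc _ _ lt_ml lt_l).
      by rewrite leNgt ge_mid.
    have -> : l = mid by lia.
    by rewrite ge_mid.
}
all: apply: (spec_mono (N := N.+2)); first lia.
all: apply: spec_jlt => //; rewrite ltnNge ge_lohi /=.
all: apply: spec_jeq => //; rewrite eqxx.
all: apply: K; first exact: frame_refl.
all: by split => //; [lia | move=> l le_l lt_l; apply: hi_inv => //; lia].
Qed.

Lemma insert_spec u ts o N Q c j : consts u -> u 8 = j -> j < n -> u 9 = size ts -> u 10 = c ->
  c <= size ts -> c < lis sigma ->
  (forall u', frame insert_regs u u' -> u' 8 = j.+1 -> u' 9 = maxn c.+1 (size ts) ->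
     spec 8 u' (set_nth 0 ts c j) o N Q) ->
  spec 30 u ts o (6 + N) Q.
Proof.
have le_lis_n := lis_le_size sigma.
case=> u0 u2 u3 u4 u5 u8 lt_j u9 u10 le_c lt_c K.
rewrite (_ : 6 + N = N.+4.+2); last lia.
apply: spec_add => //=; first lia.
apply: (spec_store word_big (l := c)) => //=; try lia.
rewrite u8; apply: spec_jlt => //=; rewrite u10 u9; case: ifP => lt_cs.
- apply: (spec_mono (N := N.+2)); first lia.
  apply: spec_add => //=; first lia.
  apply: spec_jeq => //=; rewrite eqxx.
  apply: K; first by rewrite /frame /= !eqxx.
    by rewrite /= u8 u3 addn1.
  by rewrite /= u9; lia.
- apply: spec_add => //=; first lia.
  apply: spec_add => //=; first lia.
  apply: spec_jeq => //=; rewrite eqxx.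
  apply: K; first by rewrite /frame /= !eqxx.
    by rewrite /= u8 u3 addn1.
  by rewrite /= u9 u3; lia.
Qed.

(* [b = n] stands for the end of the sequence. *)
Definition links (m b j : nat) : Prop := [/\ j < b, exists k, lis_at sigma j k /\ k.+1 = m &
  b = n \/ (b < n /\ (item sigma j < item sigma b)%R)].

Definition pass_inv (v : nat -> nat) (ts : seq nat) : Prop :=
  [/\ consts v, v 8 <= v 7 <= n, v 9 = size ts, tails_inv sigma (v 8) ts &
  (exists2 j, j < v 8 & links (v 6) (v 7) j) -> links (v 6) (v 7) (v 15)].

Lemma pass_inv_found v ts : pass_inv v ts -> ~ links (v 6) (v 7) (v 8) ->
  (exists2 j, j < (v 8).+1 & links (v 6) (v 7) j) -> links (v 6) (v 7) (v 15).
Proof.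
case=> _ _ _ _ found not_i [j lt_j link_j]; apply: found; exists j => //.
case: (ltnP j (v 8)) => // ge_j; have e : j = v 8 by lia.
by case: not_i; rewrite -e.
Qed.

Lemma pass_insert v ts o N Q u c :
  pass_inv v ts -> v 8 < v 7 -> frame pass_regs v u -> consts u -> u 8 = v 8 -> u 9 = size ts ->
  lower_bound sigma ts (item sigma (v 8)) c -> u 10 = c ->
  ((exists2 j, j < (v 8).+1 & links (v 6) (v 7) j) -> links (v 6) (v 7) (u 15)) ->
  (forall u' ts', frame pass_regs v u' -> pass_inv u' ts' -> u' 8 = (v 8).+1 ->
     spec 8 u' ts' o N Q) ->
  spec 30 u ts o (6 + N) Q.
Proof.
move=> [[v0 v2 v3 v4 v5] le_87 _ tinv _] lt_87 fvu cu u8 u9 + u10; rewrite -u10 => lb found K.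
have lt_in : v 8 < n by lia.
have tinv' := tails_inv_insert tinv lb lt_in.
have le_c : u 10 <= size ts by case: lb.
have lt_c : u 10 < lis sigma by have := tails_inv_size tinv'; rewrite size_set_nth; lia.
apply: (insert_spec (c := u 10) (j := v 8)) => //.
move=> u' fuu' u'8 u'9.
have fvu' := frame_trans fvu (frame_catl fuu').
have f i : i \in pass_regs -> u' i = v i by exact: frameE.
have u'15 : u' 15 = u 15 by apply: (frameE fuu').
apply: K => //; split.
- by rewrite /consts !f.
- by rewrite u'8 !f //; lia.
- by rewrite u'9 size_set_nth.
- by rewrite u'8.
- by rewrite u'8 (f 6) // (f 7) // u'15.
Qed.

Lemma pass_update v ts o N Q v' :
  pass_inv v ts -> v 8 < v 7 -> frame bsearch_regs v v' ->
  lower_bound sigma ts (item sigma (v 8)) (v' 10) ->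
  (forall u ts', frame pass_regs v u -> pass_inv u ts' -> u 8 = (v 8).+1 -> spec 8 u ts' o N Q) ->
  spec 23 v' ts o (11 + N) Q.
Proof.
move=> inv lt_87 fvv' lb K; have [[v0 v2 v3 v4 v5] le_87 v9 tinv _] := inv.
have f i : i \in bsearch_regs -> v' i = v i by exact: frameE.
have fpv' : frame pass_regs v v' := frame_catl fvv'.
have cv' : consts v' by rewrite /consts !f.
have [v0' v2' v3' _ _] := cv'.
have [e6 e7 e8 e9 e15] : [/\ v' 6 = v 6, v' 7 = v 7, v' 8 = v 8, v' 9 = v 9 & v' 15 = v 15].
  by split; apply: f.
have lis_i : lis_at sigma (v 8) (v' 10) by apply: lis_at_lower_bound tinv lb _; lia.
have le_c : v' 10 <= n.
  by case: lb => le_c _ _; have := tails_inv_size tinv; have := lis_le_size sigma; lia.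
have insert := pass_insert inv lt_87 _ _ _ _ lb _ _ K.
have keep_found := pass_inv_found inv.
rewrite (_ : 11 + N = (6 + N).+4.+1); last lia.
apply: spec_add => //=; first lia.
apply: spec_jeq => //=; rewrite v3' e6; case: ifP => [/eqP rank_i | rank_i].
- apply: spec_jeq => //=; rewrite e7 v0'; case: ifP => [/eqP b_n | b_n].
  + apply: spec_add => //=; first lia.
    apply: (spec_mono (N := 6 + N)); first lia.
    apply: insert => //=; rewrite ?e8 ?e9 ?v2' ?addn0 // => _.
    by split; [lia | exists (v' 10); split => //; lia | left].
  + apply: spec_jltin => //=; rewrite ?e7 ?e8; try lia.
    case: ifP => [lt_vi_vb | ge_vi_vb].
    * apply: spec_add => //=; first lia.
      apply: insert => //=; rewrite ?e8 ?e9 ?v2' ?addn0 // => _.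
      by split; [lia | exists (v' 10); split => //; lia | right; split => //; lia].
    * apply: spec_jeq => //=; rewrite eqxx.
      apply: insert => //=; rewrite ?e8 ?e9 ?e15 //.
      apply: keep_found => -[_ _ [b_n' | [_ lt_vi_vb]]]; first by rewrite b_n' eqxx in b_n.
      by rewrite lt_vi_vb in ge_vi_vb.
- apply: (spec_mono (N := (6 + N).+1)); first lia.
  apply: spec_jeq => //=; rewrite eqxx.
  apply: insert => //=; rewrite ?e8 ?e9 ?e15 //.
  apply: keep_found => -[_ [k [lis_k e_k]] _].
  by move: rank_i; rewrite -e_k (lis_at_uniq lis_k lis_i) addn1 eqxx.
Qed.

Lemma pass_spec d : forall v ts o N Q, pass_inv v ts -> v 7 - v 8 = d ->
  (forall u ts', frame pass_regs v u -> pass_inv u ts' -> u 8 = u 7 -> spec 36 u ts' o N Q) ->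
  spec 8 v ts o (d * pass_cost n + 2 + N) Q.
Proof.
have lt_n_lg : n < 2 ^ lg n by apply: trunc_log_ltn.
have le_lis := lis_le_size sigma.
elim: d => [|d IH] v ts o N Q inv dist K; have [[v0 v2 v3 v4 v5] le_87 v9 tinv _] := inv.
  rewrite (_ : 0 * pass_cost n + 2 + N = N.+2); last lia.
  apply: spec_jlt => //; case: ifP => [lt_87 | _]; first by exfalso; lia.
  apply: spec_jeq => //; rewrite eqxx.
  by apply: K (frame_refl _ _) inv _; lia.
have size_ts := tails_inv_size tinv.
apply: (spec_mono (N := (8 * lg n + 2 + (11 + (d * pass_cost n + 2 + N))).+3)).
  by rewrite /pass_cost mulSn; lia.
apply: spec_jlt => //; case: ifP => [lt_87 | ge_87]; last by exfalso; lia.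
apply: spec_add => //=; first lia.
apply: spec_add => //=; first lia.
apply: bsearch_spec => //=; try lia.
- by move=> l lt_l; case: tinv => _ tails_lt _ _ _; have := tails_lt l lt_l; lia.
- by case: tinv.
(* The search window registers 10 and 11 lie outside [bsearch_regs]. *)
move=> v' fvv' lb; have {}fvv' : frame bsearch_regs v v' by [].
apply: pass_update inv lt_87 fvv' lb _ => u ts' fvu inv_u u8.
apply: IH inv_u _ _; first by rewrite u8 (frameE fvu) //; lia.
by move=> u' ts'' fuu' inv' e87; apply: K (frame_trans fvu fuu') inv' e87.
Qed.

Definition recon_inv (v : nat -> nat) (o : seq int) (ros : seq nat) : Prop :=
  [/\ consts v, o = map Posz (rev ros), v 6 + size ros = lis sigma,
      sorted (below sigma) ros /\ all (fun i => i < n) ros &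
      if ros is j :: _ then j = v 7 /\ lis_at sigma (v 7) (v 6) else v 7 = n].

Lemma recon_inv_le v o ros : recon_inv v o ros -> v 7 <= n.
Proof.
by case=> _ _ _ _; case: ros => [-> // | j rest [_ [/ends_inc_lt lt_7 _]]]; apply: ltnW.
Qed.

Lemma recon_link v o ros : recon_inv v o ros -> 0 < v 6 ->
  exists2 j, j < v 7 & links (v 6) (v 7) j.
Proof.
case=> _ _ size_ros _; case: ros size_ros => [|j rest] /= size_ros last_ros pos6.
  have [j lis_j] : exists j, lis_at sigma j (lis sigma).-1 by apply: lis_at_last; lia.
  have lt_jn := ends_inc_lt lis_j.1.
  exists j; first lia.
  by split; [lia | exists (lis sigma).-1; split => //; lia | left].
case: last_ros => _; case: (v 6) pos6 => // m _ lis_7.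
have [i [lt_i7 lt_vi lis_i]] := lis_at_pred lis_7.
exists i => //; split => //; first by exists m.
by right; split => //; exact: ends_inc_lt lis_7.1.
Qed.

Lemma recon_inv_step v o ros j u : recon_inv v o ros -> 0 < v 6 -> links (v 6) (v 7) j ->
  consts u -> u 6 = (v 6).-1 -> u 7 = j -> recon_inv u (rcons o (Posz j)) (j :: ros).
Proof.
move=> inv pos6 [lt_j7 [k [lis_j k_6]] j_b] cu u6 u7; have le_7n := recon_inv_le inv.
case: inv => _ -> size_ros [sorted_ros ros_lt] last_ros.
split => //.
- by rewrite rev_cons map_rcons.
- by rewrite u6 /=; lia.
- split; last by rewrite /= ros_lt andbT; lia.
  case: ros sorted_ros last_ros {size_ros ros_lt} => [|j' rest] //= path_rest [e_j' lis_7].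
  subst j'; rewrite path_rest andbT /below /above lt_j7 /=.
  by case: j_b => [b_n | [_ lt_v] //]; have := ends_inc_lt lis_7.1; lia.
- by rewrite u6 u7 -k_6.
Qed.

Lemma recon_inv_done v o ros : recon_inv v o ros -> v 6 = 0 -> is_lis_positions sigma (rev o).
Proof.
case=> _ -> size_ros [sorted_ros ros_lt] _ v6.
rewrite map_rev revK.
have idx : [seq `|x|%N | x <- [seq Posz i | i <- ros]] = ros by rewrite -map_comp map_id_in.
move: sorted_ros; rewrite sorted_below => /andP[lt_ros inc_ros].
split; first by apply/allP => x /mapP[i _ ->].
by rewrite /= idx; split => //; lia.
Qed.

Definition lis_output (c : config) : Prop :=
  [/\ pc c = 44, bounded 17 (lis sigma) (2 * n + 40) c & is_lis_positions sigma (rev (out c))].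

Lemma recon_spec m : forall v ts o ros, v 6 = m -> recon_inv v o ros ->
  spec 42 v ts o (m * (n * pass_cost n + 11) + 1) lis_output.
Proof.
elim: m => [|m IH] v ts o ros v6 inv; have [[v0 v2 v3 v4 v5] _ _ _ _] := inv.
  apply: spec_jeq => //; rewrite v6 v2 eqxx => c [pc_c _ _ out_c bc].
  by apply: reaches_now => //; split; rewrite // out_c; apply: recon_inv_done inv v6.
have le_7n := recon_inv_le inv.
set M := m * (n * pass_cost n + 11) + 1.
apply: (spec_mono (N := (v 7 * pass_cost n + 2 + M.+4.+1).+4)).
  by rewrite /M mulSn; nia.
apply: spec_jeq => //; rewrite v6 v2 /=.
apply: spec_jeq => //; rewrite eqxx.
apply: spec_add => //=; first lia.
apply: spec_add => //=; first lia.
apply: spec_any_tails; apply: pass_spec.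
- by split => //=; rewrite v2 //= => -[].
- by rewrite /= v2 addn0 subn0.
move=> v' ts' fvv' inv' e87; have {}fvv' : frame pass_regs v v' by [].
have f i : i \in pass_regs -> v' i = v i by exact: frameE.
have [[v0' v2' v3' v4' v5'] _ _ _ found] := inv'.
have link : links (v 6) (v 7) (v' 15).
  by move: found; rewrite e87 (f 6) // (f 7) //; apply; apply: recon_link inv _; lia.
apply: spec_jeq => //; rewrite (f 6) // v6 v2' /=.
apply: spec_out => //.
apply: spec_add => //=; first by case: link => *; lia.
apply: spec_sub => //=; first by rewrite v3' (f 6) // v6.
apply: spec_jeq => //=; rewrite eqxx.
apply: (IH _ _ _ (v' 15 :: ros)) => /=; first by rewrite (f 6) // v6 v3' subn1.
apply: recon_inv_step inv _ link _ _ _ => /=; first lia.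
- by split.
- by rewrite (f 6) // v3' v6 subn1.
- by rewrite v2' addn0.
Qed.

Lemma lis_prog_reaches s : s <= n ->
  reaches lis_prog sigma w 17 (lis sigma) (2 * n + 40) (init_config n s)
    (run_time n (lis sigma)) lis_output.
Proof.
move=> le_sn; have le_lis := lis_le_size sigma.
set v0 := fun i => nth 0 [:: n; s] i.
have d0 : describes 17 (lis sigma) (2 * n + 40) 0 v0 [::] [::] (init_config n s).
  split => //.
  - by move=> i _; rewrite /rget /v0; case: i => [|[|i]] //=; rewrite !nth_nil.
  - by rewrite /bounded /= andbT; apply/andP; split; lia.
suff spec0 : spec 0 v0 [::] [::] (run_time n (lis sigma)) lis_output by exact: spec0 _ d0.
rewrite (_ : run_time n (lis sigma) =
  (n * pass_cost n + 2 + (lis sigma * (n * pass_cost n + 11) + 1).+2).+4.+4); last first.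
  by rewrite /run_time; lia.
apply: (spec_const word_big (k := 0)) => //=; try (rewrite /v0 /=; lia).
apply: (spec_const word_big (k := 1)) => //=; try (rewrite /v0 /=; lia).
apply: (spec_const word_big (k := 2)) => //=; try (rewrite /v0 /=; lia).
apply: (spec_const word_big (k := 17)) => //=; try (rewrite /v0 /=; lia).
do 4 (apply: spec_add => //=; try (rewrite /v0 /=; lia)).
apply: pass_spec.
- by split => //=; [rewrite /v0 /= addn0 | case].
- by rewrite /v0 /= subn0 addn0.
move=> u ts' fu inv_u e87.
have u6 : u 6 = 0 by rewrite (frameE fu).
have u7 : u 7 = n by rewrite (frameE fu) //= addn0.
have [cu _ u9 tinv _] := inv_u; have [_ u2 _ _ _] := cu.
have lis_ts : lis sigma = size ts' by rewrite e87 u7 in tinv; exact: tails_inv_lis tinv.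
apply: spec_jeq => //=; rewrite u6 u2 eqxx.
apply: spec_add => //=; first lia.
apply: (recon_spec (ros := [::])) => /=; first by rewrite u9 u2 addn0.
by split; rewrite //= ?u9 ?u2 ?addn0 ?lis_ts.
Qed.

Lemma lis_prog_finds_lis s : s <= n ->
  finds_lis_within lis_prog w sigma s (run_time n (lis sigma)).+1
    ((17 + lis sigma) * (trunc_log 2 (2 * n + 40)).+2).
Proof.
move=> le_sn.
have [t [c [le_t [run_t safe] [pc_c bc lis_out]]]] := lis_prog_reaches le_sn.
have halt : exec lis_prog sigma w (Running (init_config n s)) t.+1 = Halted c.
  by rewrite /exec iterS -/(exec _ _ _ _ t) run_t /= step_halt ?pc_c.
exists t.+1, c; split; first by []; split; first exact: halt; split; first by right.
move=> t' le_t'; case: (ltnP t t') => [lt_tt' | le_t't].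
  have -> : t' = t.+1 by lia.
  by rewrite halt; exact: space_bounded.
by have [c' [-> bc']] := safe t' le_t't; exact: space_bounded.
Qed.

End LisProgram.

(** * Complexity bounds *)

Lemma word_bound n : 2 * n + 40 < 2 ^ (8 * lg n).
Proof.
have lt_n : n < 2 ^ lg n by apply: trunc_log_ltn.
have le_7 : 2 ^ 7 <= 2 ^ (7 * lg n) by rewrite leq_exp2l // leq_pmulr.
have -> : 8 * lg n = lg n + 7 * lg n by lia.
by rewrite expnD; nia.
Qed.

Lemma trunc_log_bound n : trunc_log 2 (2 * n + 40) <= lg n + 5.
Proof.
have lt_n : n < 2 ^ lg n by apply: trunc_log_ltn.
have lt_2n : 2 * n + 40 < 2 ^ (lg n + 6) by rewrite expnD; lia.
have pos : 0 < 2 * n + 40 by rewrite addn_gt0 orbT.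
have := leq_ltn_trans (trunc_logP (isT : 1 < 2) pos) lt_2n.
by rewrite ltn_exp2l //; lia.
Qed.

Lemma run_time_bound c0 n l s : s <= n -> l * s <= c0 * n ->
  (run_time n l).+1 * s <= (60 * c0 + 300) * (n ^ 2 * lg n) + (60 * c0 + 300) * s.
Proof.
move=> le_sn le_ls; rewrite /run_time /pass_cost.
set L := lg n; set X := n * (8 * L + 30) + 11.
have -> : (l * X + n * (8 * L + 30) + 13).+1 * s = (l * s) * X + n * (8 * L + 30) * s + 14 * s.
  by ring.
have -> : (60 * c0 + 300) * (n ^ 2 * L) + (60 * c0 + 300) * s =
    60 * (c0 * (n * n * L)) + 300 * (n * n * L) + (60 * c0 + 300) * s by ring.
have le_nn : n * n <= n * n * L by rewrite leq_pmulr.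
have le_n : n <= n * n * L.
  by case: (posnP n) => [-> // | pos_n]; apply: leq_trans le_nn; rewrite leq_pmulr.
have le_lX : (l * s) * X <= 8 * (c0 * (n * n * L)) + 30 * (c0 * (n * n)) + 11 * (c0 * n).
  by rewrite [leqRHS](_ : _ = c0 * n * X); [rewrite leq_mul2r le_ls orbT | rewrite /X; ring].
have le_ns : n * (8 * L + 30) * s <= 8 * (n * n * L) + 30 * (n * n).
  by rewrite [leqRHS](_ : _ = n * (8 * L + 30) * n); [rewrite leq_mul2l le_sn orbT | ring].
have le_c0nn : c0 * (n * n) <= c0 * (n * n * L) by rewrite leq_mul2l le_nn orbT.
have le_c0n : c0 * n <= c0 * (n * n * L) by rewrite leq_mul2l le_n orbT.
have le_s : s <= (60 * c0 + 300) * s by rewrite leq_pmull // addn_gt0 orbT.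
move: le_lX le_ns le_nn le_n le_c0nn le_c0n le_s.
set A := c0 * (n * n * L); set A2 := c0 * (n * n); set A3 := c0 * n.
set Y := n * n * L; set Y2 := n * n; set P := l * s * X; set R := n * (8 * L + 30) * s.
lia.
Qed.

Lemma space_bound c0 n l s : n <= s * s -> l <= n -> l * s <= c0 * n ->
  (17 + l) * (trunc_log 2 (2 * n + 40)).+2 <= (60 * c0 + 300) * (s * lg n) + (60 * c0 + 300).
Proof.
move=> le_n_ss le_ln le_ls.
apply: leq_trans (_ : (17 + l) * (lg n + 7) <= _).
  by apply: leq_mul => //; have := trunc_log_bound n; lia.
case: (posnP s) => [s0 | pos_s].
  have n0 : n = 0 by move: le_n_ss; rewrite s0; lia.
  have lg0 : lg 0 = 1 by [].
  by move: le_ln; rewrite n0 s0 lg0; lia.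
have le_l : l <= c0 * s.
  rewrite -(leq_pmul2r pos_s); apply: leq_trans le_ls _.
  by rewrite -mulnA leq_mul2l le_n_ss orbT.
have le_sL : lg n <= s * lg n by rewrite leq_pmull.
have le_c0s : c0 * s <= c0 * (s * lg n) by rewrite leq_mul2l leq_pmulr ?orbT.
apply: leq_trans (_ : (17 + c0 * s) * (lg n + 7) <= _).
  by rewrite leq_mul2r leq_add2l le_l orbT.
rewrite (_ : (17 + c0 * s) * (lg n + 7) =
  17 * lg n + 119 + c0 * (s * lg n) + 7 * (c0 * s)); last by ring.
rewrite (_ : (60 * c0 + 300) * (s * lg n) =
  60 * (c0 * (s * lg n)) + 300 * (s * lg n)); last by ring.
move: le_sL le_c0s; set A := c0 * (s * lg n); set B := s * lg n; set D := c0 * s.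
lia.
Qed.

Theorem corollary13 :
  forall c0 : nat,
  exists (p : program) (K C : nat),
  forall (n s : nat) (sigma : seq int),
    size sigma = n ->
    (n <= s * s)%N -> (s <= n)%N ->
    (lis sigma * s <= c0 * n)%N ->
    exists T S : nat,
      (T * s <= C * (n ^ 2 * lg n) + C * s)%N /\
      (S <= C * (s * lg n) + C)%N /\
      finds_lis_within p (K * lg n) sigma s T S.
Proof.
move=> c0; exists lis_prog, 8, (60 * c0 + 300) => n s sigma <- le_n_ss le_sn le_ls.
exists (run_time (size sigma) (lis sigma)).+1,
       ((17 + lis sigma) * (trunc_log 2 (2 * size sigma + 40)).+2).
split; first exact: run_time_bound.
split; first by apply: space_bound => //; exact: lis_le_size.
exact: (lis_prog_finds_lis (word_bound _) le_sn).
Qed.
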